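(* An ordered GIFS $(\mathcal A,\Gamma,(g_\gamma)_{\gamma\in\Gamma},\prec)$ is a linear GIFS if and only if it satisfies the chain condition.
   Context: A graph-directed iterated function system (GIFS) consists of a finite directed graph $(\mathcal A,\Gamma)$ with vertex set $\mathcal A=\{1,\dots,N\}$ and finite edge set $\Gamma$ (loops and multiple edges allowed), in which every vertex has at least one outgoing edge, together with contracting similitudes $g_\gamma:\mathbb R^d\to\mathbb R^d$, $\gamma\in\Gamma$. Let $\Gamma_{ij}$ be the set of edges from $i$ to $j$ and $\Gamma_i$ the set of edges starting at $i$; $t(\gamma)$ is the terminal vertex of an edge or path $\gamma$. The invariant sets are the unique nonempty compact sets $E_1,\dots,E_N$ with $E_i=\bigcup_{j}\bigcup_{\gamma\in\Gamma_{ij}}g_\gamma(E_j)$. A path is a sequence of edges $\omega_1\omega_2\cdots$ such that the terminal vertex of $\omega_m$ is the initial vertex of $\omega_{m+1}$; $\Gamma_i^k$ (resp. $\Gamma_i^\infty$) denotes the set of paths of length $k$ (resp. infinite paths) starting at $i$, and $\omega|_n$ is the prefix of length $n$. For a finite path $\gamma=\gamma_1\dots\gamma_n$, put $g_\gamma=g_{\gamma_1}\circ\cdots\circ g_{\gamma_n}$ and $E_\gamma=g_\gamma(E_{t(\gamma)})$. The projection $\pi_i:\Gamma_i^\infty\to E_i$ is given by $\{\pi_i(\omega)\}=\bigcap_{n\ge1}E_{\omega|_n}$. An ordered GIFS is a GIFS together with a partial order $\prec$ on $\Gamma$ whose restriction to each $\Gamma_i$ is a linear order, and such that edges in $\Gamma_i$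 and $\Gamma_j$ are incomparable for $i\neq j$. It induces the dictionary order on each $\Gamma_i^k$: $\gamma_1\dots\gamma_k\prec\omega_1\dots\omega_k$ iff for some $\ell$, $\gamma_1\dots\gamma_{\ell-1}=\omega_1\dots\omega_{\ell-1}$ and $\gamma_\ell\prec\omega_\ell$. Two paths of $\Gamma_i^k$ (or two edges of $\Gamma_i$) are adjacent if they are consecutive in this linear order. The ordered GIFS is a linear GIFS if $E_\gamma\cap E_\omega\neq\emptyset$ for all $i$, $k\ge1$ and all adjacent $\gamma,\omega\in\Gamma_i^k$. The lowest path of $\Gamma_i^\infty$ is the infinite path $\omega\in\Gamma_i^\infty$ such that $\omega|_n$ is the smallest element of $\Gamma_i^n$ for every $n$; its image $\pi_i(\omega)$ is the head of $E_i$. Similarly the highest path $\omega'$ has $\omega'|_n$ the largest element of $\Gamma_i^n$ for all $n$, and $\pi_i(\omega')$ is the tail of $E_i$. The ordered GIFS satisfies the chain condition if for every $i\in\mathcal A$ and every two adjacent edges $\omega,\gamma\in\Gamma_i$ with $\omega\prec\gamma$, $g_\omega(\text{tail of }E_{t(\omega)})=g_\gamma(\text{head of }E_{t(\gamma)})$. *)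

From Stdlib Require Import Reals List Arith.
Import ListNotations.
Open Scope R_scope.
Set Implicit Arguments.

(** Points of R^d: real sequences vanishing from index d on. *)
Definition pt (d : nat) := {x : nat -> R | forall i, (d <= i)%nat -> x i = 0}.

Definition coord (d : nat) (x : pt d) (i : nat) : R := proj1_sig x i.

Definition dist (d : nat) (x y : pt d) : R :=
  sqrt (fold_right Rplus 0 (map (fun i => Rsqr (coord x i - coord y i)) (seq 0 d))).

Definition contracting_similitude (d : nat) (f : pt d -> pt d) : Prop :=
  exists r, 0 < r < 1 /\ forall x y, dist (f x) (f y) = r * dist x y.

Definition compact (d : nat) (K : pt d -> Prop) : Prop :=
  forall u : nat -> pt d, (forall n, K (u n)) ->
  exists phi : nat -> nat, (forall n, (phi n < phi (S n))%nat) /\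
  exists x, K x /\
  forall eps, eps > 0 -> exists N, forall n, (N <= n)%nat -> dist (u (phi n)) x < eps.

(** A graph-directed system: vertices 0..nV-1, edges 0..nE-1,
    edge e goes from [src e] to [tgt e] and carries the map [gmap e]. *)
Record GIFS (d : nat) : Type := mkGIFS {
  nV : nat;
  nE : nat;
  src : nat -> nat;
  tgt : nat -> nat;
  gmap : nat -> pt d -> pt d
}.

Definition is_GIFS (d : nat) (G : GIFS d) : Prop :=
  (forall e, (e < nE G)%nat -> (src G e < nV G)%nat /\ (tgt G e < nV G)%nat) /\
  (forall i, (i < nV G)%nat -> exists e, (e < nE G)%nat /\ src G e = i) /\
  (forall e, (e < nE G)%nat -> contracting_similitude (gmap G e)).

Definition is_ordered (d : nat) (G : GIFS d) (lt : nat -> nat -> Prop) : Prop :=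
  (forall e f, lt e f -> (e < nE G)%nat /\ (f < nE G)%nat) /\
  (forall e, ~ lt e e) /\
  (forall e f h, lt e f -> lt f h -> lt e h) /\
  (forall e f, (e < nE G)%nat -> (f < nE G)%nat -> src G e = src G f ->
     lt e f \/ e = f \/ lt f e) /\
  (forall e f, src G e <> src G f -> ~ lt e f).

Fixpoint fpath (d : nat) (G : GIFS d) (i : nat) (p : list nat) : Prop :=
  match p with
  | [] => True
  | e :: q => (e < nE G)%nat /\ src G e = i /\ fpath G (tgt G e) q
  end.

Definition paths (d : nat) (G : GIFS d) (i k : nat) (p : list nat) : Prop :=
  fpath G i p /\ length p = k.

Fixpoint term (d : nat) (G : GIFS d) (i : nat) (p : list nat) : nat :=
  match p with
  | [] => i
  | e :: q => term G (tgt G e) q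
  end.

Definition gpath (d : nat) (G : GIFS d) (p : list nat) (x : pt d) : pt d :=
  fold_right (fun e y => gmap G e y) x p.

Definition cyl (d : nat) (G : GIFS d) (E : nat -> pt d -> Prop)
  (i : nat) (p : list nat) (x : pt d) : Prop :=
  exists y, E (term G i p) y /\ x = gpath G p y.

Definition invariant_sets (d : nat) (G : GIFS d) (E : nat -> pt d -> Prop) : Prop :=
  forall i, (i < nV G)%nat ->
    (exists x, E i x) /\ compact (E i) /\
    forall x, E i x <-> exists e, (e < nE G)%nat /\ src G e = i /\
                          exists y, E (tgt G e) y /\ x = gmap G e y.

Definition lex (lt : nat -> nat -> Prop) (p q : list nat) : Prop :=
  exists u a b v w, p = u ++ a :: v /\ q = u ++ b :: w /\ lt a b.

Definition adjacent_paths (d : nat) (G : GIFS d) (lt : nat -> nat -> Prop)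
  (i k : nat) (p q : list nat) : Prop :=
  paths G i k p /\ paths G i k q /\ lex lt p q /\
  ~ (exists r, paths G i k r /\ lex lt p r /\ lex lt r q).

Definition linear_GIFS (d : nat) (G : GIFS d) (lt : nat -> nat -> Prop)
  (E : nat -> pt d -> Prop) : Prop :=
  forall i k p q, (i < nV G)%nat -> (1 <= k)%nat -> adjacent_paths G lt i k p q ->
    exists x, cyl G E i p x /\ cyl G E i q x.

Definition prefix (w : nat -> nat) (n : nat) : list nat := map w (seq 0 n).

Definition ipath (d : nat) (G : GIFS d) (i : nat) (w : nat -> nat) : Prop :=
  forall n, fpath G i (prefix w n).

Definition lowest_path (d : nat) (G : GIFS d) (lt : nat -> nat -> Prop)
  (i : nat) (w : nat -> nat) : Prop :=
  ipath G i w /\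
  forall n q, (1 <= n)%nat -> paths G i n q -> q = prefix w n \/ lex lt (prefix w n) q.

Definition highest_path (d : nat) (G : GIFS d) (lt : nat -> nat -> Prop)
  (i : nat) (w : nat -> nat) : Prop :=
  ipath G i w /\
  forall n q, (1 <= n)%nat -> paths G i n q -> q = prefix w n \/ lex lt q (prefix w n).

Definition proj_point (d : nat) (G : GIFS d) (E : nat -> pt d -> Prop)
  (i : nat) (w : nat -> nat) (x : pt d) : Prop :=
  forall n, (1 <= n)%nat -> cyl G E i (prefix w n) x.

Definition is_head (d : nat) (G : GIFS d) (lt : nat -> nat -> Prop)
  (E : nat -> pt d -> Prop) (i : nat) (x : pt d) : Prop :=
  exists w, lowest_path G lt i w /\ proj_point G E i w x.

Definition is_tail (d : nat) (G : GIFS d) (lt : nat -> nat -> Prop)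
  (E : nat -> pt d -> Prop) (i : nat) (x : pt d) : Prop :=
  exists w, highest_path G lt i w /\ proj_point G E i w x.

Definition adjacent_edges (d : nat) (G : GIFS d) (lt : nat -> nat -> Prop)
  (i e f : nat) : Prop :=
  (e < nE G)%nat /\ (f < nE G)%nat /\ src G e = i /\ src G f = i /\ lt e f /\
  ~ (exists h, (h < nE G)%nat /\ src G h = i /\ lt e h /\ lt h f).

Definition chain_condition (d : nat) (G : GIFS d) (lt : nat -> nat -> Prop)
  (E : nat -> pt d -> Prop) : Prop :=
  forall i e f, (i < nV G)%nat -> adjacent_edges G lt i e f ->
    forall x y, is_tail G lt E (tgt G e) x -> is_head G lt E (tgt G f) y ->
      gmap G e x = gmap G f y.

From Pilot Require Import Defs.
From Stdlib Require Import Reals List Lra Lia Classical ClassicalEpsilon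
  FunctionalExtensionality ProofIrrelevance.
Import ListNotations.
Open Scope R_scope.
Set Implicit Arguments.
(* [Reals] exports its own [dist] and [compact]. *)
Local Notation dist := Defs.dist.
Local Notation compact := Defs.compact.

(* If the system is linear, the cylinders of the adjacent paths [e :: w|n] and
   [f :: w'|n], with [w] the highest path from [t(e)] and [w'] the lowest path
   from [t(f)], meet; they contain [g_e(tail)] and [g_f(head)] respectively and
   have diameter O(r^n), so [g_e(tail) = g_f(head)].  Conversely, adjacent paths
   split as [u ++ a :: v] and [u ++ b :: w] where [a], [b] are adjacent edges, [v]
   is a prefix of the highest path from [t(a)] and [w] a prefix of the lowest
   path from [t(b)]; the chain condition then puts [g_u g_a(tail) = g_u g_b(head)]
   in both cylinders. *)

Lemma finite_bound (P : nat -> R -> Prop) n :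
  (forall j B B', B <= B' -> P j B -> P j B') ->
  (forall j, (j < n)%nat -> exists B, P j B) ->
  exists B, forall j, (j < n)%nat -> P j B.
Proof.
  intros Hmono. induction n as [|n IH]; intros Hex.
  - exists 0. intros; lia.
  - destruct IH as [B HB]; [intros j Hj; apply Hex; lia|].
    destruct (Hex n) as [Bn HBn]; [lia|].
    exists (Rmax B Bn). intros j Hj. destruct (Nat.eq_dec j n) as [->|Hne].
    + apply (Hmono n Bn); [apply Rmax_r|exact HBn].
    + apply (Hmono j B); [apply Rmax_l|apply HB; lia].
Qed.

Lemma strict_mono_ge_id {phi : nat -> nat} :
  (forall n, (phi n < phi (S n))%nat) -> forall n, (n <= phi n)%nat.
Proof. intros Hphi n. induction n; [lia|]. specialize (Hphi n). lia. Qed.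

Lemma sum_nonneg (f : nat -> R) l :
  (forall j, 0 <= f j) -> 0 <= fold_right Rplus 0 (map f l).
Proof. intros Hf. induction l as [|a l IH]; simpl; [lra|]. specialize (Hf a). lra. Qed.

Lemma sum_ge_term (f : nat -> R) l i :
  (forall j, 0 <= f j) -> In i l -> f i <= fold_right Rplus 0 (map f l).
Proof.
  intros Hf. induction l as [|a l IH]; simpl; intros Hi; [contradiction|].
  destruct Hi as [<-|Hi].
  - pose proof (sum_nonneg f l Hf). lra.
  - specialize (IH Hi). specialize (Hf a). lra.
Qed.

Lemma sum_le_const (f : nat -> R) l c :
  (forall j, In j l -> f j <= c) -> fold_right Rplus 0 (map f l) <= INR (length l) * c.
Proof.
  induction l as [|a l IH]; intros Hf; simpl map; simpl fold_right; [simpl; lra|].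
  change (length (a :: l)) with (S (length l)). rewrite S_INR.
  assert (f a <= c) by (apply Hf; left; reflexivity).
  assert (fold_right Rplus 0 (map f l) <= INR (length l) * c)
    by (apply IH; intros j Hj; apply Hf; right; exact Hj).
  lra.
Qed.

Section Euclidean.

Variable d : nat.

Definition tends_to (u : nat -> pt d) (x : pt d) : Prop :=
  forall eps, eps > 0 -> exists N, forall n, (N <= n)%nat -> dist (u n) x < eps.

Lemma dist_nonneg (a b : pt d) : 0 <= dist a b.
Proof. apply sqrt_pos. Qed.

Lemma coord_le_dist (a b : pt d) i :
  (i < d)%nat -> Rabs (coord a i - coord b i) <= dist a b.
Proof.
  intros Hi. unfold dist. rewrite <- sqrt_Rsqr_abs. apply sqrt_le_1_alt.
  apply (sum_ge_term (fun j => Rsqr (coord a j - coord b j))).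
  - intros j. apply Rle_0_sqr.
  - apply in_seq. lia.
Qed.

Lemma pt_ext (a b : pt d) :
  (forall i, (i < d)%nat -> coord a i = coord b i) -> a = b.
Proof.
  destruct a as [fa Ha], b as [fb Hb]. unfold coord. simpl. intros Hab.
  assert (fa = fb) as <-.
  { apply functional_extensionality. intros i.
    destruct (Nat.lt_ge_cases i d); [auto|]. rewrite Ha, Hb; auto. }
  f_equal. apply proof_irrelevance.
Qed.

Lemma pt_eq_of_near (a b : pt d) :
  (forall eps, 0 < eps -> exists z, dist z a < eps /\ dist z b < eps) -> a = b.
Proof.
  intros Hnear. apply pt_ext. intros i Hi. apply Rminus_diag_uniq.
  destruct (Req_dec (coord a i - coord b i) 0) as [|Hne]; [assumption|exfalso].
  set (gap := Rabs (coord a i - coord b i)).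
  assert (Hgap : 0 < gap) by (apply Rabs_pos_lt; exact Hne).
  destruct (Hnear (gap / 2)) as [z [Hza Hzb]]; [lra|].
  pose proof (coord_le_dist z a Hi). pose proof (coord_le_dist z b Hi).
  assert (gap <= Rabs (coord z i - coord a i) + Rabs (coord z i - coord b i)).
  { unfold gap. rewrite <- (Rabs_Ropp (coord z i - coord a i)).
    replace (coord a i - coord b i)
      with (- (coord z i - coord a i) + (coord z i - coord b i)) by ring.
    apply Rabs_triang. }
  lra.
Qed.

Lemma compact_coord_bounded (K : pt d -> Prop) i : compact K -> (i < d)%nat ->
  exists B, forall a, K a -> Rabs (coord a i) <= B.
Proof.
  intros HK Hi. apply NNPP. intros Hunbounded.
  assert (Hbig : forall n : nat, exists a, K a /\ INR n < Rabs (coord a i)).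
  { intros n. apply NNPP. intros Hn. apply Hunbounded. exists (INR n). intros a Ka.
    apply Rnot_lt_le. intros Hlt. apply Hn. exists a. auto. }
  destruct (choice _ Hbig) as [u Hu].
  destruct (HK u) as [phi [Hphi [x [_ Hconv]]]]; [intros n; apply Hu|].
  destruct (Hconv 1) as [N HN]; [lra|].
  destruct (INR_archimed 1 (Rabs (coord x i) + 1)) as [n0 Hn0]; [lra|].
  set (n := Nat.max N n0).
  specialize (HN n ltac:(lia)).
  assert (INR n0 <= INR (phi n))
    by (apply le_INR; pose proof (strict_mono_ge_id Hphi n); lia).
  pose proof (proj2 (Hu (phi n))).
  pose proof (coord_le_dist (u (phi n)) x Hi).
  pose proof (Rabs_triang_inv (coord (u (phi n)) i) (coord x i)).
  lra.
Qed.

Lemma compact_dist_bounded (K : pt d -> Prop) : compact K ->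
  exists M, forall a b, K a -> K b -> dist a b <= M.
Proof.
  intros HK.
  destruct (finite_bound (fun i B => forall a, K a -> Rabs (coord a i) <= B) (n := d))
    as [B HB].
  { intros i B B' HBB' HBi a Ka. specialize (HBi a Ka). lra. }
  { intros i Hi. apply compact_coord_bounded; assumption. }
  exists (sqrt (INR d * Rsqr (B + B))). intros a b Ka Kb.
  unfold dist. apply sqrt_le_1_alt.
  pose proof (sum_le_const (fun j => Rsqr (coord a j - coord b j)) (seq 0 d)
                (c := Rsqr (B + B))) as Hsum.
  rewrite length_seq in Hsum. apply Hsum.
  intros j Hj. apply in_seq in Hj. apply Rsqr_le_abs_1.
  pose proof (HB j ltac:(lia) a Ka). pose proof (HB j ltac:(lia) b Kb).
  pose proof (Rle_abs (B + B)).
  assert (Rabs (coord a j - coord b j) <= Rabs (coord a j) + Rabs (coord b j)).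
  { unfold Rminus. rewrite <- (Rabs_Ropp (coord b j)). apply Rabs_triang. }
  lra.
Qed.

Lemma tends_to_shift (u : nat -> pt d) x m :
  tends_to u x -> tends_to (fun k => u (k + m)%nat) x.
Proof.
  intros Hu eps Heps. destruct (Hu eps Heps) as [N HN].
  exists N. intros n Hn. apply HN. lia.
Qed.

Lemma common_contraction_ratio (g : nat -> pt d -> pt d) n :
  (forall e, (e < n)%nat -> contracting_similitude (g e)) ->
  exists r, 0 <= r < 1 /\
    forall e a b, (e < n)%nat -> dist (g e a) (g e b) <= r * dist a b.
Proof.
  induction n as [|n IH]; intros Hg.
  - exists 0. split; [lra|]. intros; lia.
  - destruct IH as [r [Hr Hlip]]; [intros e He; apply Hg; lia|].
    destruct (Hg n) as [rn [Hrn Hsim]]; [lia|].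
    exists (Rmax r rn). split.
    + pose proof (Rmax_l r rn). split; [lra|]. apply Rmax_lub_lt; lra.
    + intros e a b He. pose proof (dist_nonneg a b).
      destruct (Nat.eq_dec e n) as [->|Hne].
      * rewrite Hsim. apply Rmult_le_compat_r; [assumption|apply Rmax_r].
      * apply (Rle_trans _ (r * dist a b)); [apply Hlip; lia|].
        apply Rmult_le_compat_r; [assumption|apply Rmax_l].
Qed.

End Euclidean.

Section Paths.

Variables (d : nat) (G : GIFS d).

Lemma fpath_app p q i :
  fpath G i (p ++ q) <-> fpath G i p /\ fpath G (term G i p) q.
Proof. revert i. induction p as [|e p IH]; intros i; simpl; [tauto|]. rewrite IH. tauto. Qed.

Lemma term_app p q i : term G i (p ++ q) = term G (term G i p) q.
Proof. revert i. induction p; intros i; simpl; auto. Qed.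

Lemma gpath_app p q x : gpath G (p ++ q) x = gpath G p (gpath G q x).
Proof. apply fold_right_app. Qed.

Lemma length_prefix (w : nat -> nat) n : length (prefix w n) = n.
Proof. unfold prefix. rewrite length_map, length_seq. reflexivity. Qed.

Lemma prefix_split (w : nat -> nat) m n : (m <= n)%nat ->
  prefix w n = prefix w m ++ map w (seq m (n - m)).
Proof.
  intros Hmn. unfold prefix. replace n with (m + (n - m))%nat at 1 by lia.
  rewrite seq_app, map_app. reflexivity.
Qed.

Variable E : nat -> pt d -> Prop.

Lemma cyl_cons c e p x : cyl G E (tgt G e) p x -> cyl G E c (e :: p) (gmap G e x).
Proof. intros [y [Hy ->]]. exists y. split; [exact Hy|reflexivity]. Qed.

Lemma cyl_app c u p x : cyl G E (term G c u) p x -> cyl G E c (u ++ p) (gpath G u x).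
Proof. intros [y [Hy ->]]. exists y. rewrite term_app, gpath_app. auto. Qed.

Hypothesis HG : is_GIFS G.

Lemma tgt_lt {e} : (e < nE G)%nat -> (tgt G e < nV G)%nat.
Proof. intros He. apply (proj1 HG e He). Qed.

Lemma term_lt {p i} : (i < nV G)%nat -> fpath G i p -> (term G i p < nV G)%nat.
Proof.
  revert i. induction p as [|e p IH]; intros i Hi Hp; simpl; [assumption|].
  destruct Hp as [He [_ Hp]]. apply IH; [apply tgt_lt|]; assumption.
Qed.

Lemma path_exists m {c} : (c < nV G)%nat -> exists p, fpath G c p /\ length p = m.
Proof.
  revert c. induction m as [|m IH]; intros c Hc.
  - exists []. simpl. auto.
  - destruct (proj1 (proj2 HG) c Hc) as [e [He Hsrc]].
    destruct (IH (tgt G e) (tgt_lt He)) as [p [Hp Hlen]].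
    exists (e :: p). simpl. auto.
Qed.

Lemma gpath_lipschitz r : 0 <= r ->
  (forall e a b, (e < nE G)%nat -> dist (gmap G e a) (gmap G e b) <= r * dist a b) ->
  forall c p a b, fpath G c p ->
  dist (gpath G p a) (gpath G p b) <= r ^ length p * dist a b.
Proof.
  intros Hr Hg c p. revert c. induction p as [|e p IH]; intros c a b Hp.
  - unfold gpath. simpl. lra.
  - destruct Hp as [He [_ Hp]].
    change (dist (gmap G e (gpath G p a)) (gmap G e (gpath G p b))
            <= r * r ^ length p * dist a b).
    eapply Rle_trans; [apply Hg; exact He|].
    rewrite Rmult_assoc. apply Rmult_le_compat_l; [exact Hr|]. eapply IH; exact Hp.
Qed.

Lemma uniform_contraction : exists r, 0 <= r < 1 /\
  forall e a b, (e < nE G)%nat -> dist (gmap G e a) (gmap G e b) <= r * dist a b.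
Proof. apply common_contraction_ratio. apply HG. Qed.

Lemma gpath_nonexpansive {c p} a b : fpath G c p ->
  dist (gpath G p a) (gpath G p b) <= dist a b.
Proof.
  intros Hp. destruct uniform_contraction as [r [Hr Hlip]].
  eapply Rle_trans; [eapply (gpath_lipschitz (proj1 Hr) Hlip); exact Hp|].
  pose proof (dist_nonneg a b). pose proof (pow_le r (length p) (proj1 Hr)).
  assert (r ^ length p <= 1) by (rewrite <- (pow1 (length p)); apply pow_incr; lra).
  nra.
Qed.

Hypothesis HE : invariant_sets G E.

Lemma cyl_subset {c p x} : (c < nV G)%nat -> fpath G c p -> cyl G E c p x -> E c x.
Proof.
  revert c x. induction p as [|e p IH]; intros c x Hc Hp [y [Hy ->]]; [exact Hy|].
  destruct Hp as [He [Hsrc Hp]].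
  apply (proj2 (proj2 (HE Hc))). exists e. repeat split; [assumption|assumption|].
  exists (gpath G p y). split; [|reflexivity].
  apply (IH (tgt G e)); [apply tgt_lt; exact He|exact Hp|]. exists y. auto.
Qed.

Lemma cyl_app_inv {c p q z} : (c < nV G)%nat -> fpath G c (p ++ q) ->
  cyl G E c (p ++ q) z -> cyl G E c p z.
Proof.
  intros Hc Hpq [y [Hy ->]]. apply fpath_app in Hpq as [Hp Hq].
  rewrite gpath_app. exists (gpath G q y). split; [|reflexivity].
  apply (cyl_subset (term_lt Hc Hp) Hq). exists y. rewrite <- term_app. auto.
Qed.

Lemma cyl_prefix_le {c w m n z} : (c < nV G)%nat -> ipath G c w -> (m <= n)%nat ->
  cyl G E c (prefix w n) z -> cyl G E c (prefix w m) z.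
Proof.
  intros Hc Hw Hmn Hz. pose proof (Hw n) as Hp.
  rewrite (prefix_split w Hmn) in Hz, Hp. exact (cyl_app_inv Hc Hp Hz).
Qed.

Lemma proj_point_cyl {c w x} : (c < nV G)%nat -> ipath G c w ->
  proj_point G E c w x -> forall m, cyl G E c (prefix w m) x.
Proof.
  intros Hc Hw Hx [|m]; [|apply Hx; lia].
  exists x. split; [|reflexivity].
  exact (cyl_subset Hc (Hw 1%nat) (Hx 1%nat (le_n 1))).
Qed.

Lemma invariant_sets_diam_bounded : exists M, 0 < M /\
  forall j a b, (j < nV G)%nat -> E j a -> E j b -> dist a b <= M.
Proof.
  destruct (finite_bound (fun j M => forall a b, E j a -> E j b -> dist a b <= M)
              (n := nV G)) as [M HM].
  { intros j B B' HBB' HB a b Ha Hb. specialize (HB a b Ha Hb). lra. }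
  { intros j Hj. apply compact_dist_bounded, (HE Hj). }
  exists (Rmax 1 M). split; [pose proof (Rmax_l 1 M); lra|].
  intros j a b Hj Ha Hb. apply (Rle_trans _ M); [apply (HM j Hj); assumption|apply Rmax_r].
Qed.

Lemma cyl_diam_geometric : exists r M, 0 <= r < 1 /\ 0 < M /\
  forall c p x y, (c < nV G)%nat -> fpath G c p ->
    cyl G E c p x -> cyl G E c p y -> dist x y <= r ^ length p * M.
Proof.
  destruct uniform_contraction as [r [Hr Hlip]].
  destruct invariant_sets_diam_bounded as [M [HM Hdiam]].
  exists r, M. split; [exact Hr|split; [exact HM|]].
  intros c p x y Hc Hp [x' [Hx' ->]] [y' [Hy' ->]].
  eapply Rle_trans; [eapply (gpath_lipschitz (proj1 Hr) Hlip); exact Hp|].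
  apply Rmult_le_compat_l; [apply pow_le, Hr|].
  exact (Hdiam _ x' y' (term_lt Hc Hp) Hx' Hy').
Qed.

(* Cylinders are closed: they are images of compact sets under the nonexpansive [g_p]. *)
Lemma cyl_closed {c p} {u : nat -> pt d} {x} : (c < nV G)%nat -> fpath G c p ->
  (forall k, cyl G E c p (u k)) -> tends_to u x -> cyl G E c p x.
Proof.
  intros Hc Hp Hu Hconv. set (t := term G c p).
  destruct (choice (fun k y => E t y /\ u k = gpath G p y)) as [Y HY];
    [intros k; apply Hu|].
  destruct (proj1 (proj2 (HE (term_lt Hc Hp))) Y) as [psi [Hpsi [y [Hy HYconv]]]];
    [intros k; apply HY|].
  exists y. split; [exact Hy|]. apply pt_eq_of_near. intros eps Heps.
  destruct (Hconv eps Heps) as [N1 HN1]. destruct (HYconv eps Heps) as [N2 HN2].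
  set (k := Nat.max N1 N2). pose proof (strict_mono_ge_id Hpsi k).
  exists (u (psi k)). split; [apply HN1; lia|].
  destruct (HY (psi k)) as [_ ->].
  eapply Rle_lt_trans; [exact (gpath_nonexpansive _ _ Hp)|]. apply HN2. lia.
Qed.

Lemma proj_point_exists c w : (c < nV G)%nat -> ipath G c w ->
  exists x, proj_point G E c w x.
Proof.
  intros Hc Hw.
  destruct (choice (fun n z => cyl G E c (prefix w n) z)) as [z Hz].
  { intros n. destruct (proj1 (HE (term_lt Hc (Hw n)))) as [y Hy].
    exists (gpath G (prefix w n) y), y. auto. }
  destruct (proj1 (proj2 (HE Hc)) z) as [phi [Hphi [x [_ Hconv]]]].
  { intros n. exact (cyl_subset Hc (Hw n) (Hz n)). }
  exists x. intros m _.
  apply (cyl_closed (u := fun k => z (phi (k + m)%nat)) Hc (Hw m)).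
  - intros k. apply (cyl_prefix_le Hc Hw (n := phi (k + m)%nat)); [|apply Hz].
    pose proof (strict_mono_ge_id Hphi (k + m)). lia.
  - exact (tends_to_shift (u := fun n => z (phi n)) m Hconv).
Qed.

End Paths.

Section Lex.

Context {lt : nat -> nat -> Prop}.

Lemma lex_nil_l {p} : ~ lex lt [] p.
Proof. intros [u [a [b [v [w [H _]]]]]]. destruct u; discriminate. Qed.

Lemma lex_nil_r {p} : ~ lex lt p [].
Proof. intros [u [a [b [v [w [_ [H _]]]]]]]. destruct u; discriminate. Qed.

Lemma lex_cons_head {e h v r} : lt e h -> lex lt (e :: v) (h :: r).
Proof. intros Heh. exists [], e, h, v, r. auto. Qed.

Lemma lex_app_l u v r : lex lt v r -> lex lt (u ++ v) (u ++ r).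
Proof.
  intros [u' [a [b [v' [w' [-> [-> Hab]]]]]]].
  exists (u ++ u'), a, b, v', w'. rewrite <- !app_assoc. auto.
Qed.

Lemma lex_cons_inv {e v h r} :
  lex lt (e :: v) (h :: r) -> lt e h \/ (e = h /\ lex lt v r).
Proof.
  intros [u [a [b [v' [w' [Hp [Hq Hab]]]]]]].
  destruct u as [|c u]; simpl in Hp, Hq; injection Hp as -> ->; injection Hq as <- ->.
  - left. exact Hab.
  - right. split; [reflexivity|]. exists u, a, b, v', w'. auto.
Qed.

Lemma lex_asym :
  (forall e, ~ lt e e) -> (forall e f h, lt e f -> lt f h -> lt e h) ->
  forall p q, lex lt p q -> lex lt q p -> False.
Proof.
  intros Hirr Htr. induction p as [|e p IH]; intros q Hpq Hqp; [exact (lex_nil_l Hpq)|].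
  destruct q as [|h q]; [exact (lex_nil_r Hpq)|].
  apply lex_cons_inv in Hpq as [Heh|[<- Hpq]];
    apply lex_cons_inv in Hqp as [Hhe|[Hhe Hqp]].
  - exact (Hirr e (Htr _ _ _ Heh Hhe)).
  - subst. exact (Hirr e Heh).
  - exact (Hirr e Hhe).
  - exact (IH q Hpq Hqp).
Qed.

End Lex.

Lemma lex_flip (lt : nat -> nat -> Prop) p q :
  lex lt p q -> lex (fun a b => lt b a) q p.
Proof. intros [u [a [b [v [w [Hp [Hq Hab]]]]]]]. exists u, b, a, w, v. auto. Qed.

Lemma exists_greatest_below (P : nat -> Prop) {lt : nat -> nat -> Prop} {n} :
  (forall e f h, lt e f -> lt f h -> lt e h) ->
  (forall e f, P e -> P f -> lt e f \/ e = f \/ lt f e) ->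
  (exists e, (e < n)%nat /\ P e) ->
  exists m, (m < n)%nat /\ P m /\ forall e, (e < n)%nat -> P e -> e = m \/ lt e m.
Proof.
  intros Htr Htot. induction n as [|n IH]; intros [e0 [He0 HPe0]]; [lia|].
  destruct (classic (exists e, (e < n)%nat /\ P e)) as [Hex|Hnone].
  - destruct (IH Hex) as [m [Hm [HPm Hmax]]].
    assert (Hbelow : forall e, (e < S n)%nat -> P e -> e <> n -> e = m \/ lt e m)
      by (intros e He HPe Hne; apply Hmax; [lia|exact HPe]).
    destruct (classic (P n)) as [HPn|HPn].
    + destruct (Htot n m HPn HPm) as [Hnm|[Hnm|Hmn]]; [|lia|].
      * exists m. repeat split; [lia|exact HPm|]. intros e He HPe.
        destruct (Nat.eq_dec e n) as [->|Hne]; [right; exact Hnm|exact (Hbelow e He HPe Hne)].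
      * exists n. repeat split; [lia|exact HPn|]. intros e He HPe.
        destruct (Nat.eq_dec e n) as [->|Hne]; [left; reflexivity|right].
        destruct (Hbelow e He HPe Hne) as [->|Hem]; [exact Hmn|exact (Htr _ _ _ Hem Hmn)].
    + exists m. repeat split; [lia|exact HPm|]. intros e He HPe.
      apply Hbelow; [exact He|exact HPe|]. intros ->. contradiction.
  - exists n. split; [lia|]. split.
    + destruct (Nat.eq_dec e0 n) as [<-|Hne]; [exact HPe0|].
      exfalso. apply Hnone. exists e0. split; [lia|exact HPe0].
    + intros e He HPe. left. destruct (Nat.eq_dec e n) as [|Hne]; [assumption|].
      exfalso. apply Hnone. exists e. split; [lia|exact HPe].
Qed.

Section Extremal.

Variables (d : nat) (G : GIFS d).
Context {lt : nat -> nat -> Prop}.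
Hypothesis HG : is_GIFS G.
Hypothesis Htr : forall e f h, lt e f -> lt f h -> lt e h.
Hypothesis Htot : forall e f, (e < nE G)%nat -> (f < nE G)%nat -> src G e = src G f ->
  lt e f \/ e = f \/ lt f e.

Lemma highest_edge {c} : (c < nV G)%nat -> exists m, (m < nE G)%nat /\ src G m = c /\
  forall e, (e < nE G)%nat -> src G e = c -> e = m \/ lt e m.
Proof.
  intros Hc.
  destruct (exists_greatest_below (fun e => (e < nE G)%nat /\ src G e = c) (n := nE G) Htr)
    as [m [Hm [[_ Hsrc] Hmax]]].
  - intros e f [He Hse] [Hf Hsf]. apply Htot; congruence.
  - destruct (proj1 (proj2 HG) c Hc) as [e He]. exists e. tauto.
  - exists m. repeat split; [exact Hm|exact Hsrc|]. intros e He Hse. apply Hmax; auto.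
Qed.

(* The highest path follows the greatest outgoing edge [top v] at each vertex [v]. *)
Lemma highest_path_exists {c} : (c < nV G)%nat -> exists w, highest_path G lt c w.
Proof.
  intros Hc.
  destruct (choice (fun v m => (v < nV G)%nat -> (m < nE G)%nat /\ src G m = v /\
    forall e, (e < nE G)%nat -> src G e = v -> e = m \/ lt e m)) as [top Htop].
  { intros v. destruct (Nat.lt_ge_cases v (nV G)) as [Hv|Hv].
    - destruct (highest_edge Hv) as [m Hm]. exists m. auto.
    - exists 0%nat. intros; lia. }
  set (vertex := fun n => Nat.iter n (fun v => tgt G (top v)) c).
  set (w := fun n => top (vertex n)).
  assert (Hvertex : forall n, (vertex n < nV G)%nat).
  { induction n as [|n IH]; [exact Hc|]. apply (tgt_lt HG). apply (Htop _ IH). }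
  assert (Hpath : forall n m, fpath G (vertex m) (map w (seq m n))).
  { induction n as [|n IH]; intros m; simpl; [exact I|].
    destruct (Htop _ (Hvertex m)) as [Htm [Hsm _]]. repeat split; auto. apply (IH (S m)). }
  assert (Hhigh : forall n m q, fpath G (vertex m) q -> length q = n ->
     q = map w (seq m n) \/ lex lt q (map w (seq m n))).
  { induction n as [|n IH]; intros m q Hq Hlen.
    - left. destruct q; [reflexivity|discriminate].
    - destruct q as [|e q]; [discriminate|]. simpl.
      destruct Hq as [He [Hse Hq]]. injection Hlen as Hlen.
      destruct (proj2 (proj2 (Htop _ (Hvertex m))) e He Hse) as [->|Hlt].
      + destruct (IH (S m) q Hq Hlen) as [->|Hlex]; [left; reflexivity|right].
        exact (lex_app_l [top (vertex m)] Hlex).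
      + right. apply lex_cons_head. exact Hlt. }
  exists w. split.
  - intros n. exact (Hpath n 0%nat).
  - intros n q _ [Hq Hlen]. exact (Hhigh n 0%nat q Hq Hlen).
Qed.

End Extremal.

Lemma lowest_path_exists {d} {G : GIFS d} {lt : nat -> nat -> Prop} {c} :
  is_GIFS G ->
  (forall e f h, lt e f -> lt f h -> lt e h) ->
  (forall e f, (e < nE G)%nat -> (f < nE G)%nat -> src G e = src G f ->
     lt e f \/ e = f \/ lt f e) ->
  (c < nV G)%nat -> exists w, lowest_path G lt c w.
Proof.
  intros HG Htr Htot Hc.
  assert (Htr_flip : forall e f h, lt f e -> lt h f -> lt h e)
    by (intros e f h Hfe Hhf; exact (Htr _ _ _ Hhf Hfe)).
  assert (Htot_flip : forall e f, (e < nE G)%nat -> (f < nE G)%nat ->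
            src G e = src G f -> lt f e \/ e = f \/ lt e f)
    by (intros e f He Hf Hs; destruct (Htot e f He Hf Hs) as [H|[H|H]]; auto).
  destruct (highest_path_exists (lt := fun a b => lt b a) HG Htr_flip Htot_flip Hc)
    as [w [Hw Hhigh]].
  exists w. split; [exact Hw|]. intros n q Hn Hq.
  destruct (Hhigh n q Hn Hq) as [Heq|Hlex]; [left; exact Heq|right].
  exact (lex_flip Hlex).
Qed.

Section Ordered.

Variables (d : nat) (G : GIFS d) (lt : nat -> nat -> Prop) (E : nat -> pt d -> Prop).
Hypothesis HG : is_GIFS G.
Hypothesis HO : is_ordered G lt.
Hypothesis HE : invariant_sets G E.

Lemma tail_exists {c} : (c < nV G)%nat -> exists x, is_tail G lt E c x.
Proof.
  intros Hc. destruct HO as [_ [_ [Htr [Htot _]]]].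
  destruct (highest_path_exists HG Htr Htot Hc) as [w Hw].
  destruct (proj_point_exists HG HE Hc (proj1 Hw)) as [x Hx].
  exists x, w. auto.
Qed.

Lemma head_exists {c} : (c < nV G)%nat -> exists x, is_head G lt E c x.
Proof.
  intros Hc. destruct HO as [_ [_ [Htr [Htot _]]]].
  destruct (lowest_path_exists HG Htr Htot Hc) as [w Hw].
  destruct (proj_point_exists HG HE Hc (proj1 Hw)) as [x Hx].
  exists x, w. auto.
Qed.

Lemma highest_path_dominates {c hw v} : highest_path G lt c hw -> fpath G c v ->
  v = prefix hw (length v) \/ lex lt v (prefix hw (length v)).
Proof.
  intros [_ Hhigh] Hv. destruct v as [|e v]; [left; reflexivity|].
  apply Hhigh; [simpl; lia|split; auto].
Qed.

Lemma lowest_path_dominates {c lw v} : lowest_path G lt c lw -> fpath G c v ->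
  v = prefix lw (length v) \/ lex lt (prefix lw (length v)) v.
Proof.
  intros [_ Hlow] Hv. destruct v as [|e v]; [left; reflexivity|].
  apply Hlow; [simpl; lia|split; auto].
Qed.

Lemma adjacent_paths_extremal {i e f hw lw} n :
  adjacent_edges G lt i e f -> highest_path G lt (tgt G e) hw ->
  lowest_path G lt (tgt G f) lw ->
  adjacent_paths G lt i (S n) (e :: prefix hw n) (f :: prefix lw n).
Proof.
  intros [He [Hf [Hse [Hsf [Hef Hbetween]]]]] Hhw Hlw.
  destruct HO as [_ [Hirr [Htr _]]].
  pose proof (lex_asym Hirr Htr) as Hasym.
  repeat split; auto; try apply Hhw; try apply Hlw;
    try (simpl; rewrite length_prefix; reflexivity).
  { apply lex_cons_head. exact Hef. }
  intros [[|h r] [[Hr Hlen] [Hlo Hhi]]]; [exact (lex_nil_r Hlo)|].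
  destruct Hr as [Hh [Hsh Hr]]. simpl in Hlen. injection Hlen as Hlen.
  apply lex_cons_inv in Hlo as [Heh|[<- Hlo]];
    apply lex_cons_inv in Hhi as [Hhf|[Hhf Hhi]].
  - apply Hbetween. exists h. auto.
  - subst h. rewrite <- Hlen in Hhi.
    destruct (lowest_path_dominates Hlw Hr) as [Heq|Hlex].
    + rewrite <- Heq in Hhi. exact (Hasym _ _ Hhi Hhi).
    + exact (Hasym _ _ Hhi Hlex).
  - rewrite <- Hlen in Hlo.
    destruct (highest_path_dominates Hhw Hr) as [Heq|Hlex].
    + rewrite <- Heq in Hlo. exact (Hasym _ _ Hlo Hlo).
    + exact (Hasym _ _ Hlo Hlex).
  - subst. exact (Hirr f Hef).
Qed.

Lemma adjacent_paths_split {i k u a b v w} : lt a b ->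
  adjacent_paths G lt i k (u ++ a :: v) (u ++ b :: w) ->
  adjacent_edges G lt (term G i u) a b /\
  (forall hw, highest_path G lt (tgt G a) hw -> v = prefix hw (length v)) /\
  (forall lw, lowest_path G lt (tgt G b) lw -> w = prefix lw (length w)).
Proof.
  intros Hab [[Hp Hplen] [[Hq Hqlen] [_ Hnone]]].
  apply fpath_app in Hp as [Hu [Ha [Hsa Hv]]]. apply fpath_app in Hq as [_ [Hb [Hsb Hw]]].
  rewrite length_app in Hplen, Hqlen. simpl in Hplen, Hqlen.
  assert (Hbetween : forall r, fpath G i r -> length r = k ->
            lex lt (u ++ a :: v) r -> lex lt r (u ++ b :: w) -> False)
    by (intros r Hr Hlen Hlo Hhi; apply Hnone; exists r; repeat split; assumption).
  split; [|split].
  - repeat split; auto. intros [h [Hh [Hsh [Hah Hhb]]]].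
    destruct (path_exists HG (length v) (tgt_lt HG Hh)) as [z [Hz Hzlen]].
    apply (Hbetween (u ++ h :: z)).
    + apply fpath_app. split; [exact Hu|]. repeat split; assumption.
    + rewrite length_app. simpl. lia.
    + exists u, a, h, v, z. auto.
    + exists u, h, b, z, w. auto.
  - intros hw Hhw. destruct (highest_path_dominates Hhw Hv) as [Heq|Hlex]; [exact Heq|].
    exfalso. apply (Hbetween (u ++ a :: prefix hw (length v))).
    + apply fpath_app. split; [exact Hu|]. repeat split; try assumption. apply Hhw.
    + rewrite length_app. simpl. rewrite length_prefix. lia.
    + apply lex_app_l, (lex_app_l [a]), Hlex.
    + exists u, a, b, (prefix hw (length v)), w. auto.
  - intros lw Hlw. destruct (lowest_path_dominates Hlw Hw) as [Heq|Hlex]; [exact Heq|].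
    exfalso. apply (Hbetween (u ++ b :: prefix lw (length w))).
    + apply fpath_app. split; [exact Hu|]. repeat split; try assumption. apply Hlw.
    + rewrite length_app. simpl. rewrite length_prefix. lia.
    + exists u, a, b, v, (prefix lw (length w)). auto.
    + apply lex_app_l, (lex_app_l [b]), Hlex.
Qed.

Lemma linear_of_chain_condition : chain_condition G lt E -> linear_GIFS G lt E.
Proof.
  intros Hchain i k p q Hi _ Hadj.
  pose proof Hadj as [[Hp _] [_ [[u [a [b [v [w [-> [-> Hab]]]]]]] _]]].
  destruct (adjacent_paths_split Hab Hadj) as [Hedges [Hv Hw]].
  pose proof Hedges as [Ha [Hb _]].
  assert (Hj : (term G i u < nV G)%nat)
    by (apply fpath_app in Hp; exact (term_lt HG Hi (proj1 Hp))).
  destruct (tail_exists (tgt_lt HG Ha)) as [x [hw [Hhw Hx]]].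
  destruct (head_exists (tgt_lt HG Hb)) as [y [lw [Hlw Hy]]].
  exists (gpath G u (gmap G a x)). split.
  - apply cyl_app, cyl_cons. rewrite (Hv hw Hhw).
    exact (proj_point_cyl HG HE (tgt_lt HG Ha) (proj1 Hhw) Hx _).
  - rewrite (Hchain _ a b Hj Hedges x y (ex_intro _ hw (conj Hhw Hx))
                                        (ex_intro _ lw (conj Hlw Hy))).
    apply cyl_app, cyl_cons. rewrite (Hw lw Hlw).
    exact (proj_point_cyl HG HE (tgt_lt HG Hb) (proj1 Hlw) Hy _).
Qed.

Lemma chain_condition_of_linear : linear_GIFS G lt E -> chain_condition G lt E.
Proof.
  intros Hlin i e f Hi Hadj x y [hw [Hhw Hx]] [lw [Hlw Hy]].
  pose proof Hadj as [He [Hf _]].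
  destruct (cyl_diam_geometric HG HE) as [r [M [Hr [HM Hdiam]]]].
  apply pt_eq_of_near. intros eps Heps.
  destruct (pow_lt_1_zero r ltac:(rewrite Rabs_right; lra) (eps / M)
              ltac:(apply Rdiv_lt_0_compat; lra)) as [n Hn].
  assert (Hsmall : r ^ S n * M < eps).
  { specialize (Hn (S n) ltac:(lia)).
    rewrite Rabs_right in Hn by (apply Rle_ge, pow_le; lra).
    replace eps with (eps / M * M) by (field; lra).
    apply Rmult_lt_compat_r; assumption. }
  pose proof (adjacent_paths_extremal n Hadj Hhw Hlw) as Hpq.
  destruct (Hlin i (S n) _ _ Hi ltac:(lia) Hpq) as [z [Hze Hzf]].
  destruct Hpq as [[HP HPlen] [[HQ HQlen] _]].
  exists z. split; eapply Rle_lt_trans; try exact Hsmall.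
  - rewrite <- HPlen. apply (Hdiam i _ _ _ Hi HP Hze).
    apply cyl_cons. exact (proj_point_cyl HG HE (tgt_lt HG He) (proj1 Hhw) Hx n).
  - rewrite <- HQlen. apply (Hdiam i _ _ _ Hi HQ Hzf).
    apply cyl_cons. exact (proj_point_cyl HG HE (tgt_lt HG Hf) (proj1 Hlw) Hy n).
Qed.

End Ordered.

Theorem theorem1p2 (d : nat) (G : GIFS d) (lt : nat -> nat -> Prop)
  (E : nat -> pt d -> Prop) :
  is_GIFS G -> is_ordered G lt -> invariant_sets G E ->
  (linear_GIFS G lt E <-> chain_condition G lt E).
Proof.
  intros HG HO HE. split.
  - exact (chain_condition_of_linear HG HO HE).
  - exact (linear_of_chain_condition HG HO HE).
Qed.
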